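(* There is a function $f:\mathbb N\to\mathbb N$ with the following property. Let $G=H\langle a\rangle$ be a finite group, where $H$ is a normal nilpotent subgroup of $G$ and the order of $a$ is coprime to $|H|$. Then $|[H,a]|\le f(|\mathcal R(a)|)$.
   Context: Commutators: $[x,y]=x^{-1}y^{-1}xy$, left-normed, and $[x,{}_n\,y]=[x,y,\dots,y]$ with $y$ repeated $n$ times. $\mathcal R(a)$ denotes the minimal right Engel sink of $a$ in $G$: the smallest subset of $G$ such that for every $x\in G$ the commutators $[a,{}_n\,x]$ lie in it for all sufficiently large $n$. $[H,a]$ denotes the subgroup generated by all $h^{-1}h^{a}$, $h\in H$. *)

From mathcomp Require Import all_boot all_fingroup all_solvable.
Set Implicit Arguments. Unset Strict Implicit. Unset Printing Implicit Defensive.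
Local Open Scope group_scope.

(* Left-normed iterated commutator [a, _n x] = [a, x, ..., x] (n copies of x),
   with [~ y, x] = y^-1 * x^-1 * y * x (mathcomp's commg). *)
Definition iter_comm (gT : finGroupType) (n : nat) (a x : gT) : gT :=
  iter n (fun y => [~ y, x]) a.

Definition right_engel_sink (gT : finGroupType) (G : {set gT}) (a : gT)
    (S : {set gT}) : Prop :=
  S \subset G /\
  forall x, x \in G -> exists m, forall n, (m <= n)%N -> iter_comm n a x \in S.

Definition is_min_right_engel_sink (gT : finGroupType) (G : {set gT}) (a : gT)
    (R : {set gT}) : Prop :=
  right_engel_sink G a R /\
  forall S : {set gT}, right_engel_sink G a S -> R \subset S.

Definition commg_elt (gT : finGroupType) (H : {set gT}) (a : gT) : {set gT} :=
  <<[set h^-1 * h ^ a | h in H]>>.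

From mathcomp Require Import all_boot all_fingroup all_solvable zify.
Set Implicit Arguments. Unset Strict Implicit. Unset Printing Implicit Defensive.
Local Open Scope group_scope.

(* Let K = [H, a]; coprimality gives [K, a] = K.  If V is an abelian a-invariant
   section of K, then v |-> [v, a] is an endomorphism of V with kernel C_V(a)
   which permutes [V, a]; hence every [v, a] recurs among the Engel iterates
   [a, _n a v^-1] for arbitrarily large n, and |V : C_V(a)| <= |R(a)|.  For
   V = K/K' the centraliser is trivial, so |K : K'| <= |R(a)|.  For the abelian
   terms gamma_j(K), j > c/2, the index |gamma_j(K) : C(a)| is at most |R(a)|,
   and it drops every two steps of the lower central series: by the three
   subgroup lemma and [K, a] = K, a cannot centralise two consecutive factors
   of a nontrivial segment.  So the class c is at most 4|R(a)|.  Finally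
   gamma_(t+2)/gamma_(t+3) is generated by commutators of bounded order that
   depend only on cosets of gamma_(t+2), which bounds |K : gamma_(t+3)| in terms
   of |K : gamma_(t+2)|; iterating c times bounds |K|. *)

Lemma decr2_add_leq (m : nat -> nat) i k :
  (forall j, i <= j -> j.+2 <= i + 2 * k -> m j.+2 < m j) -> m (i + 2 * k) + k <= m i.
Proof.
elim: k => [|k IHk] decr; first by rewrite muln0 !addn0.
have step : m (i + 2 * k).+2 < m (i + 2 * k) by apply: decr; lia.
have /IHk : forall j, i <= j -> j.+2 <= i + 2 * k -> m j.+2 < m j.
  by move=> j le_ij le_jk; apply: decr; lia.
by rewrite (_ : i + 2 * k.+1 = (i + 2 * k).+2); lia.
Qed.

Lemma homo_iter (f : nat -> nat) n :
  {homo f : x y / x <= y} -> {homo iter n f : x y / x <= y}.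
Proof. by move=> homo_f x y le_xy; elim: n => //= n IHn; apply: homo_f. Qed.

Lemma leq_iter (f : nat -> nat) m n x :
  (forall y, y <= f y) -> m <= n -> iter m f x <= iter n f x.
Proof.
move=> le_f le_mn; rewrite -(subnK le_mn) iterD.
by elim: (n - m) => //= k IHk; apply: leq_trans IHk (le_f _).
Qed.

Section GroupTheory.
Variable gT : finGroupType.
Implicit Types (G H K N X Y A C : {group gT}).

Lemma commg_centM_sub X Y A : X \subset 'C(A) * Y -> [~: X, A] \subset [~: Y, A].
Proof.
move=> sXCY; rewrite gen_subG; apply/subsetP => _ /imset2P[x z Xx Az ->].
have /mulsgP[c y Cc Yy ->] := subsetP sXCY x Xx.
rewrite commMgJ; have /commgP/eqP -> : commute c z by apply: (centP Cc).
by rewrite conj1g mul1g mem_commg.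
Qed.

Lemma coprime_commGid H A :
  A \subset 'N(H) -> coprime #|H| #|A| -> solvable H -> [~: H, A, A] = [~: H, A].
Proof.
move=> nHA coHA solH; set K := [~: H, A].
have nKH : H \subset 'N(K) := commg_norml H A.
apply/eqP; rewrite eqEsubset commg_subl commg_normr /=.
have defHq : 'C_H(A) / K = H / K.
  rewrite coprime_quotient_cent ?commg_subl ?commg_normr //.
  exact/setIidPl/quotient_cents2r.
have sHKC : H \subset K * 'C_H(A) by rewrite -quotientSK // defHq.
rewrite -(normC (subset_trans (subsetIl H 'C(A)) nKH)) in sHKC.
by apply/commg_centM_sub/(subset_trans sHKC); rewrite mulSg ?subsetIr.
Qed.

Lemma three_subgroup_sub G H K N :
  G \subset 'N(N) -> H \subset 'N(N) -> K \subset 'N(N) ->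
  [~: G, H, K] \subset N -> [~: H, K, G] \subset N -> [~: K, G, H] \subset N.
Proof.
move=> nNG nNH nNK.
have nNR X Y : X \subset 'N(N) -> Y \subset 'N(N) -> [~: X, Y] \subset 'N(N).
  by move=> nNX nNY; apply: subset_trans (der1_subG _); apply: commgSS.
have nNGH := nNR _ _ nNG nNH; have nNHK := nNR _ _ nNH nNK.
have nNKG := nNR _ _ nNK nNG.
rewrite -(quotient_sub1 (nNR _ _ nNGH nNK)) -(quotient_sub1 (nNR _ _ nNHK nNG)).
rewrite -(quotient_sub1 (nNR _ _ nNKG nNH)) !quotientR // => /trivgP R1 /trivgP R2.
exact/trivgP/three_subgroup.
Qed.

Lemma index_subset_leq H G C : H \subset G -> #|H : C| <= #|G : C|.
Proof. by move=> sHG; apply/subset_leq_card/imsetS. Qed.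

Lemma index_subset_ltn H G C :
  H \subset G -> ~~ (G \subset C * H) -> #|H : C| < #|G : C|.
Proof.
move=> sHG; apply: contraR; rewrite -leqNgt => le_GH; apply/subsetP => g Gg.
have /eqP eqCHG : rcosets C H == rcosets C G by rewrite eqEcard imsetS.
have /rcosetsP[h Hh eq_gh] : C :* g \in rcosets C H.
  by rewrite eqCHG; apply/rcosetsP; exists g.
have : g \in C :* h by rewrite -eq_gh rcoset_refl.
by rewrite mem_rcoset => Cgh; rewrite -(mulgKV h g) mem_mulg.
Qed.

Lemma index_cent_ltn X Y A :
  Y \subset X -> A \subset 'N(Y) -> ~~ ([~: X, A] \subset Y) ->
  #|Y : 'C(A)| < #|X : 'C(A)|.
Proof.
move=> sYX nYA; apply: contraR; rewrite -leqNgt => le_XY.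
apply: subset_trans (@commg_centM_sub X Y A _) _; last by rewrite commg_subl.
by apply: contraLR le_XY => not_sub; rewrite -ltnNge index_subset_ltn.
Qed.

Lemma lcn_commg_sub K i j : [~: 'L_i.+1(K), 'L_j.+1(K)] \subset 'L_(i + j).+2(K).
Proof.
elim: j i => [|j IHj] i; first by rewrite addn0.
have nLK n : 'L_n(K) \subset 'N('L_(i + j.+1).+2(K)).
  exact: subset_trans (lcn_sub n K) (lcn_norm _ _).
rewrite lcnSn commGC; apply: three_subgroup_sub; rewrite ?nLK ?lcn_norm //.
- by rewrite [[~: K, _]]commGC -lcnSn -addSnnS IHj.
- by apply: subset_trans (commSg _ (IHj i)) _; rewrite -lcnSn addnS.
Qed.

Lemma lcn_proper K j : nilpotent K -> j < nil_class K -> 'L_j.+2(K) \proper 'L_j.+1(K).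
Proof.
move=> nilK lt_jc; rewrite lcnSn.
apply: (nil_comm_properl nilK (lcn_sub _ _)); last by rewrite subsetI subxx lcn_norm.
by apply/eqP => /(lcn_nil_classP j nilK); rewrite leqNgt lt_jc.
Qed.

Lemma card_gen_commute_expn (s : seq gT) n : 0 < n ->
  {in s &, forall x y, commute x y} -> {in s, forall x, x ^+ n = 1} ->
  #|<<[set x in s]>>| <= n ^ size s.
Proof.
move=> n_gt0; elim: s => [|x s IHs] cs expn_s.
  have -> : [set x in [::]] = set0 :> {set gT} by apply/setP => y; rewrite !inE.
  by rewrite gen0 cards1.
have cxs : <[x]> \subset 'C(<<[set y in s]>>).
  rewrite cent_gen cycle_subG; apply/centP => y; rewrite inE => s_y.
  by apply: cs; rewrite ?inE ?s_y ?eqxx ?orbT.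
have sub : <<[set y in x :: s]>> \subset <[x]> * <<[set y in s]>>.
  rewrite -comm_joingE; last exact: centC.
  rewrite gen_subG; apply/subsetP => y.
  rewrite inE => /predU1P[-> | s_y]; first by rewrite mem_gen ?inE ?cycle_id.
  by rewrite (subsetP (joing_subr _ _)) // mem_gen // inE.
apply: leq_trans (subset_leq_card sub) _.
apply: leq_trans (dvdn_leq _ (dvdn_cardMg _ _)) _; first by rewrite muln_gt0 !cardG_gt0.
rewrite expnS leq_mul //.
  by rewrite dvdn_leq // order_dvdn expn_s ?inE ?eqxx.
apply: IHs => [y z s_y s_z | y s_y]; [apply: cs | apply: expn_s];
  by rewrite inE ?s_y ?s_z orbT.
Qed.

Section CentralCommutator.
Variables Q X : {group gT}.
Hypotheses (sXQ : X \subset Q) (nXQ : Q \subset 'N(X)) (cYQ : [~: X, Q] \subset 'Z(Q)).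

Let sYX : [~: X, Q] \subset X. Proof. by rewrite commg_subl. Qed.
Let sYQ : [~: X, Q] \subset Q. Proof. exact: subset_trans sYX sXQ. Qed.

Let cenY y z : y \in [~: X, Q] -> z \in Q -> commute y z.
Proof. by move=> Yy Qz; apply: (centsP (subset_trans cYQ (subsetIr _ _))). Qed.

Lemma expg_index_commg x y :
  x \in X -> y \in Q -> [~ x, y] ^+ #|X : [~: X, Q]| = 1.
Proof.
move=> Xx Qy; set Y := [~: X, Q].
have Qx : x \in Q := subsetP sXQ x Xx.
rewrite -commXg; last exact/commute_sym/cenY/Qx/mem_commg.
have nYX : X \subset 'N(Y).
  by apply/(subset_trans sXQ)/cents_norm; rewrite centsC (subset_trans cYQ) ?subsetIr.
have Yxn : x ^+ #|X : Y| \in Y.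
  apply: coset_idr; first by rewrite groupX ?(subsetP nYX).
  by rewrite morphX ?(subsetP nYX) //= -card_quotient // expg_cardG ?mem_quotient.
by apply/eqP/commgP/cenY.
Qed.

Lemma commg_repr_rcoset x y : x \in X -> y \in Q ->
  [~ repr ([~: X, Q] :* x), repr ([~: X, Q] :* y)] = [~ x, y].
Proof.
move=> Xx Qy; set Y := [~: X, Q].
have /rcosetP[u Yu ->] := mem_repr_rcoset Y x.
have /rcosetP[v Yv ->] := mem_repr_rcoset Y y.
have Qvy : v * y \in Q by rewrite groupM // (subsetP sYQ).
rewrite commMgJ; have /commgP/eqP -> := cenY Yu Qvy.
rewrite conj1g mul1g commgMJ.
by have /commgP/eqP -> := commute_sym (cenY Yv (subsetP sXQ x Xx)); rewrite conj1g mulg1.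
Qed.

Lemma card_commg_central :
  #|[~: X, Q]| <= #|X : [~: X, Q]| ^ (#|X : [~: X, Q]| * #|Q : [~: X, Q]|).
Proof.
set Y := [~: X, Q]; set S := commg_set X Q.
have cardS : #|S| <= #|X : Y| * #|Q : Y|.
  pose F (p : {set gT} * {set gT}) := [~ repr p.1, repr p.2].
  apply: (@leq_trans #|F @: setX (rcosets Y X) (rcosets Y Q)|); last first.
    by apply: leq_trans (leq_imset_card _ _) _; rewrite cardsX.
  apply/subset_leq_card/subsetP => _ /imset2P[x y Xx Qy ->].
  apply/imsetP; exists (Y :* x, Y :* y); last by rewrite /F commg_repr_rcoset.
  by rewrite inE; apply/andP; split; apply/rcosetsP; [exists x | exists y].
have cS : {in enum S &, forall u v, commute u v}.
  move=> u v; rewrite !mem_enum => Su Sv.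
  by apply: cenY; rewrite ?(subsetP sYQ) ?mem_gen.
have expS : {in enum S, forall u, u ^+ #|X : Y| = 1}.
  by move=> u; rewrite mem_enum => /imset2P[x y Xx Qy ->]; apply: expg_index_commg.
have := card_gen_commute_expn (indexg_gt0 X Y) cS expS.
rewrite set_enum -cardE => /leq_trans; apply; exact: leq_pexp2l (indexg_gt0 _ _) cardS.
Qed.

End CentralCommutator.

End GroupTheory.

Definition lcn_index_step (B : nat) : nat := B * B ^ (B * B).

Lemma index_lcn_step (gT : finGroupType) (K : {group gT}) t :
  #|K : 'L_t.+3(K)| <= lcn_index_step #|K : 'L_t.+2(K)|.
Proof.
rewrite -(Lagrange_index (lcn_sub t.+2 K) (lcn_subS t.+2 K)) /lcn_index_step.
set B := #|K : _|; set N := 'L_t.+3(K).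
have nNL n : 'L_n(K) \subset 'N(N) := subset_trans (lcn_sub n K) (lcn_norm _ _).
have defY : [~: 'L_t.+1(K) / N, K / N] = 'L_t.+2(K) / N.
  by rewrite -quotientR ?nNL ?lcn_norm // -lcnSn.
have cYK : [~: 'L_t.+1(K) / N, K / N] \subset 'Z(K / N) by rewrite defY lcn_central.
have := card_commg_central (quotientS N (lcn_sub t.+1 K))
  (quotient_norms N (lcn_norm t.+1 K)) cYK.
have sNL : N \subset 'L_t.+2(K) := lcn_subS _ _.
rewrite defY card_quotient ?nNL // !index_quotient_eq ?lcn_norm ?nNL ?lcn_sub ?lcn_subS
  ?subIset ?sNL ?orbT // => le_Y.
have B_gt0 : 0 < B := indexg_gt0 _ _.
have le_nB : #|'L_t.+1(K) : 'L_t.+2(K)| <= B.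
  by rewrite dvdn_leq // indexSg ?lcn_subS ?lcn_sub.
rewrite leq_mul //; apply: leq_trans le_Y _.
apply: (@leq_trans (B ^ (#|'L_t.+1(K) : 'L_t.+2(K)| * B))).
  by rewrite leq_exp2r // muln_gt0 indexg_gt0.
by rewrite leq_pexp2l // leq_mul.
Qed.

Lemma leq_lcn_index_step B : B <= lcn_index_step B.
Proof. by case: B => // B; rewrite leq_pmulr ?expn_gt0. Qed.

Lemma lcn_index_step_homo : {homo lcn_index_step : B C / B <= C}.
Proof.
move=> [|B] C le_BC //; have C_gt0 : 0 < C := leq_trans (ltn0Sn B) le_BC.
rewrite leq_mul // (leq_trans (leq_pexp2l _ (leq_mul le_BC le_BC))) //.
by rewrite leq_exp2r ?muln_gt0 ?C_gt0.
Qed.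

Lemma index_lcn_leq (gT : finGroupType) (K : {group gT}) t :
  #|K : 'L_t.+2(K)| <= iter t lcn_index_step #|K : 'L_2(K)|.
Proof.
elim: t => // t IHt; apply: leq_trans (index_lcn_step K t) _.
exact: lcn_index_step_homo.
Qed.

Section CoprimeLowerCentral.
Variables (gT : finGroupType) (K A : {group gT}).
Hypotheses (nKA : A \subset 'N(K)) (eKA : [~: K, A] = K).

Lemma lcn_sub_commA j :
  [~: 'L_j.+1(K), A] \subset 'L_j.+2(K) -> [~: 'L_j.+2(K), A] \subset 'L_j.+3(K) ->
  'L_j.+2(K) \subset 'L_j.+3(K).
Proof.
move=> sub1 sub2.
have nLK n : 'L_n(K) \subset 'N('L_j.+3(K)) := subset_trans (lcn_sub n K) (lcn_norm _ _).
rewrite lcnSn commGC -{1}eKA.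
apply: three_subgroup_sub (char_norm_trans (lcn_char _ _) nKA) (nLK _) (lcn_norm _ _) _ _.
  by rewrite (commGC A); apply: subset_trans (commSg _ sub1) (lcnSnS _ _).
by rewrite -lcnSn.
Qed.

Lemma index_lcn_cent_ltn j : nilpotent K -> j.+1 < nil_class K ->
  #|'L_j.+3(K) : 'C(A)| < #|'L_j.+1(K) : 'C(A)|.
Proof.
move=> nilK lt_jc.
have nLA n : A \subset 'N('L_n(K)) := char_norm_trans (lcn_char n K) nKA.
have [sub1 | nsub1] := boolP ([~: 'L_j.+1(K), A] \subset 'L_j.+2(K)); last first.
  apply: leq_ltn_trans (index_subset_leq _ (lcn_subS _ _)) _.
  exact: index_cent_ltn (lcn_subS _ _) (nLA _) nsub1.
have [sub2 | nsub2] := boolP ([~: 'L_j.+2(K), A] \subset 'L_j.+3(K)); last first.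
  apply: leq_trans (index_cent_ltn (lcn_subS _ _) (nLA _) nsub2) _.
  exact: index_subset_leq _ (lcn_subS _ _).
by have := lcn_proper nilK lt_jc; rewrite properE lcn_sub_commA ?andbF.
Qed.

Lemma nil_class_leq r : nilpotent K ->
  (forall j, abelian 'L_j(K) -> #|'L_j(K) : 'C(A)| <= r) -> nil_class K <= 4 * r.
Proof.
move=> nilK abelian_bound; set c := nil_class K.
(* 2i > c makes gamma_i(K) abelian, and [i, c + 1] still has room for k double steps. *)
set k := c.+1 %/ 4; set i := c.+1 - 2 * k.
have def_c : i + 2 * k = c.+1 by rewrite /i /k; lia.
have Lc1 : 'L_c.+1(K) = 1 by apply/(lcn_nil_classP c nilK).
have [i' def_i] : exists i', i = i'.+1 by exists i.-1; rewrite prednK // /i /k; lia.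
have abLi : abelian 'L_i(K).
  apply/commG1P/trivgP; rewrite -Lc1 def_i.
  apply: subset_trans (lcn_commg_sub K i' i') (lcn_sub_leq _ _).
  by move: def_i def_c; rewrite /k; lia.
pose m j := #|'L_j(K) : 'C(A)|.
have decr j : i <= j -> j.+2 <= i + 2 * k -> m j.+2 < m j.
  case: j => [|j] le_ij le_jk; first by rewrite def_i in le_ij.
  by rewrite /m; apply: (index_lcn_cent_ltn nilK); lia.
have := decr2_add_leq decr; rewrite def_c.
have : 0 < m c.+1 := indexg_gt0 _ _.
have := abelian_bound _ abLi; rewrite /m /k; lia.
Qed.

End CoprimeLowerCentral.

Section EngelSinks.
Variable gT : finGroupType.
Implicit Types (G M : {group gT}) (R : {set gT}).

Lemma iter_comm_in G n a x : a \in G -> x \in G -> iter_comm n a x \in G.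
Proof. by move=> Ga Gx; elim: n => //= n IHn; rewrite groupR. Qed.

Lemma morphim_right_engel_sink (rT : finGroupType) (D G : {group gT})
    (f : {morphism D >-> rT}) a R :
  G \subset D -> a \in G -> right_engel_sink G a R ->
  right_engel_sink (f @* G) (f a) (f @* R).
Proof.
move=> sGD Ga [sRG sinkR]; split=> [|_ /morphimP[x Dx Gx ->]]; first exact: morphimS.
have [m sink_m] := sinkR x Gx; exists m => n le_mn.
have fE k : iter_comm k (f a) (f x) = f (iter_comm k a x).
  elim: k => //= k ->; rewrite morphR ?(subsetP sGD) ?iter_comm_in //.
by rewrite fE mem_morphim ?sink_m ?(subsetP sGD) ?iter_comm_in.
Qed.

Section AbelianCommutatorMap.
Variables (M : {group gT}) (a : gT).
Hypotheses (abM : abelian M) (nMa : a \in 'N(M)).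

Lemma mem_commgr w : w \in M -> [~ w, a] \in M.
Proof. by move=> Mw; rewrite commgEl groupM ?groupV ?memJ_norm. Qed.

Lemma commgr_morphM : {in M &, {morph commg^~ a : x y / x * y}}.
Proof.
move=> x y Mx My /=; rewrite commMgJ; congr (_ * _).
by apply/conjg_fixP/commgP; apply: (centsP abM); rewrite ?mem_commgr.
Qed.

(* [a, a w^-1] = [w, a], and [t, a w^-1] = [t, a] for t in M since M is abelian. *)
Lemma iter_comm_abelian n w : w \in M ->
  iter_comm n.+1 a (a * w^-1) = iter n.+1 (commg^~ a) w.
Proof.
move=> Mw; have cM := centsP abM.
have Mwa : w ^ a \in M by rewrite memJ_norm.
elim: n => [|n IHn].
  rewrite /iter_comm /= commgMJ commgg conj1g mulg1 commgEr invgK commgEl.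
  exact/commuteV/(cM _ Mwa).
rewrite /iter_comm iterS -/(iter_comm n.+1 a (a * w^-1)) IHn [in RHS]iterS.
have Mt : iter n.+1 (commg^~ a) w \in M by elim: n.+1 => //= k Mk; rewrite mem_commgr.
rewrite commgMJ; have /commgP/eqP -> := cM _ Mt _ (groupVr Mw); rewrite mul1g.
by apply/conjg_fixP/commgP/(cM _ (mem_commgr Mt)); rewrite groupV.
Qed.

Lemma commgr_injective :
  coprime #|M| #[a] -> {in [~: M, <[a]>] &, injective (commg^~ a)}.
Proof.
move=> coMa x y Wx Wy /= exy.
have sWM : [~: M, <[a]>] \subset M by rewrite commg_subl cycle_subG.
have [Mx My] := (subsetP sWM x Wx, subsetP sWM y Wy).
have : x * y^-1 \in 'C_[~: M, <[a]>](<[a]>).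
  rewrite inE groupM ?groupV //= cent_cycle; apply/cent1P/commgP.
  by rewrite commgr_morphM ?groupV // exy -commgr_morphM ?groupV // mulgV comm1g.
rewrite coprime_abel_cent_TI ?cycle_subG // => /set1gP/eqP.
by rewrite -eq_mulgV1 => /eqP.
Qed.

Lemma abelian_index_cent_leq_sink G R :
  right_engel_sink G a R -> a \in G -> M \subset G -> coprime #|M| #[a] ->
  #|M : 'C_M[a]| <= #|R|.
Proof.
move=> [_ sinkR] Ga sMG coMa; pose f := Morphism commgr_morphM.
have kerf : 'ker f = 'C_M[a].
  apply/setP => x; rewrite !in_setI; apply: andb_id2l => _.
  by rewrite (sameP cent1P commgP) !inE.
rewrite -kerf -{1}(setIid M) -card_morphim; apply/subset_leq_card/subsetP.
move=> _ /morphimP[w _ Mw ->] /=.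
have sWM : [~: M, <[a]>] \subset M by rewrite commg_subl cycle_subG.
have fW : {homo commg^~ a : x / x \in [~: M, <[a]>]}.
  by move=> x Wx; rewrite mem_commg ?cycle_id ?(subsetP sWM).
have Wfw : [~ w, a] \in [~: M, <[a]>] by rewrite mem_commg ?cycle_id.
have period := iter_order_in fW (commgr_injective coMa) Wfw.
set p := fingraph.order _ _ in period; have p_gt0 : 0 < p := fingraph.order_gt0 _ _.
have periodM k : iter (p * k) (commg^~ a) [~ w, a] = [~ w, a].
  by elim: k => [|k IHk]; rewrite ?muln0 // mulnS iterD IHk period.
have [m sink_m] := sinkR _ (groupM Ga (groupVr (subsetP sMG w Mw))).
rewrite -(periodM m) -iterSr -iter_comm_abelian //; apply: sink_m.
by rewrite ltnW // ltnS leq_pmull.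
Qed.

End AbelianCommutatorMap.
End EngelSinks.

Lemma index_der1_leq_sink (gT : finGroupType) (G M : {group gT}) a (R : {set gT}) :
  right_engel_sink G a R -> a \in G -> M \subset G -> G \subset 'N(M) ->
  coprime #|M| #[a] -> [~: M, <[a]>] = M -> #|M : M^`(1)| <= #|R|.
Proof.
move=> sinkR Ga sMG nMG coMa defM; set N := M^`(1).
have nNG : G \subset 'N(N) := char_norm_trans (der_char 1 M) nMG.
have [nNa nNM] := (subsetP nNG a Ga, subset_trans sMG nNG).
have nMa : a \in 'N(M) := subsetP nMG a Ga.
have coMa' : coprime #|M / N| #[coset N a].
  apply: coprime_dvdl (dvdn_quotient _ _) (coprime_dvdr _ coMa).
  exact: morph_order.
have nMAq : <[a]> / N \subset 'N(M / N) by rewrite quotient_norms ?cycle_subG.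
have abMq : abelian (M / N) := sub_der1_abelian (subxx N).
have TI : 'C_(M / N)[coset N a] = 1.
  rewrite -cent_cycle -quotient_cycle // -{1}defM quotientR ?cycle_subG //.
  by apply: coprime_abel_cent_TI; rewrite //= quotient_cycle.
have nMqa : coset N a \in 'N(M / N) := subsetP nMAq _ (mem_quotient N (cycle_id a)).
have := abelian_index_cent_leq_sink abMq nMqa (morphim_right_engel_sink _ nNG Ga sinkR)
  (mem_quotient N Ga) (quotientS N sMG) coMa'.
rewrite TI indexg1 card_quotient // => /leq_trans; apply; exact: leq_morphim.
Qed.

Theorem lemma2p3 :
  exists f : nat -> nat,
    forall (gT : finGroupType) (G H : {group gT}) (a : gT) (R : {set gT}),
      H <| G -> nilpotent H -> (H * <[a]>)%g = G ->
      coprime #[a] #|H| ->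
      is_min_right_engel_sink G a R ->
      #|commg_elt H a| <= f #|R|.
Proof.
exists (fun r => iter (4 * r) lcn_index_step r).
move=> gT G H a R nHG nilH defG coaH [sinkR _]; set A := <[a]>%G; set K := [~: H, A]%G.
have Ga : a \in G by rewrite -defG (subsetP (mulG_subr _ _)) ?cycle_id.
have nHA : A \subset 'N(H) by rewrite (subset_trans _ (normal_norm nHG)) ?cycle_subG.
have nKG : G \subset 'N(K) by rewrite -defG mul_subG ?commg_norml ?commg_normr.
have sKH : K \subset H by rewrite commg_subl.
have sKG : K \subset G := subset_trans sKH (normal_sub nHG).
have coKa : coprime #|K| #[a] by rewrite coprime_sym (coprime_dvdr (cardSg sKH)).
have eKA : [~: K, A] = K by rewrite coprime_commGid ?nilpotent_sol // coprime_sym.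
have nilK : nilpotent K := nilpotentS sKH nilH.
have le_K'R : #|K : 'L_2(K)| <= #|R| := index_der1_leq_sink sinkR Ga sKG nKG coKa eKA.
have le_cR : nil_class K <= 4 * #|R|.
  have nKA : A \subset 'N(K) := commg_normr A H.
  apply: (nil_class_leq nKA eKA nilK) => j abL.
  have sLK := lcn_sub j K.
  rewrite /A cent_cycle -indexgI; apply: (abelian_index_cent_leq_sink abL _ sinkR Ga).
  - by rewrite (subsetP (char_norm_trans (lcn_char j K) nKA)) ?cycle_id.
  - exact: subset_trans sLK sKG.
  exact: coprime_dvdl (cardSg sLK) coKa.
apply: leq_trans (_ : #|commg_elt H a| <= #|K|) _.
  apply/subset_leq_card; rewrite gen_subG; apply/subsetP => _ /imsetP[h Hh ->].
  by rewrite -commgEl mem_commg ?cycle_id.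
have -> : #|K| = #|K : 'L_(nil_class K).+2(K)|.
  by rewrite (_ : 'L_ _(K) = 1) ?indexg1 //; apply/lcn_nil_classP.
apply: leq_trans (index_lcn_leq K _) _.
apply: leq_trans (homo_iter _ lcn_index_step_homo le_K'R) _.
exact: leq_iter leq_lcn_index_step le_cR.
Qed.
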